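(* Let $\nu$ be a Krull valuation on $\mathbb{K}[x]$ and $Q$ a key polynomial for $\nu$ with $n=\deg Q$. Let $f=f_0+f_1Q+\dots+f_sQ^s$ where each $f_i\in\mathbb{K}[x]$ is either $0$ or a product of polynomials of degree smaller than $n$. Then $\nu_Q(f)=\min_{0\le i\le s}\{\nu(f_iQ^i)\}$.
   Context: Truncation: every $g\in\mathbb{K}[x]$ has a unique $Q$-expansion $g=g_0+g_1Q+\dots+g_tQ^t$ with $\deg g_i<\deg Q$; $\nu_Q(g)=\min_i\nu(g_iQ^i)$. Key polynomials: for nonzero $g$, with Hasse derivatives $\partial_bg=\sum_{i\ge b}\binom{i}{b}a_ix^{i-b}$ for $g=\sum a_ix^i$, $\epsilon(g)=\max_{1\le b\le\deg g}(\nu(g)-\nu(\partial_bg))/b$ if $\deg g>0$ and $\epsilon(g)=-\infty$ if $g$ is constant; a monic $Q$ is a key polynomial for $\nu$ if $\epsilon(g)\ge\epsilon(Q)$ implies $\deg g\ge\deg Q$ for all $g$. (For a key polynomial $Q$, $\nu_Q$ is a valuation.) *)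

From mathcomp Require Import all_boot all_order all_algebra.
Set Implicit Arguments. Unset Strict Implicit. Unset Printing Implicit Defensive.
Import GRing.Theory.
Local Open Scope ring_scope.

Record ordered_group (G : zmodType) (le : rel G) : Prop := OrderedGroup {
  og_refl : reflexive le;
  og_anti : antisymmetric le;
  og_trans : transitive le;
  og_total : total le;
  og_add : forall a b c, le a b -> le (a + c) (b + c)
}.

(* G u {oo}: None stands for oo (the top element). *)
Definition oadd (G : zmodType) (x y : option G) : option G :=
  match x, y with Some a, Some b => Some (a + b) | _, _ => None end.
Definition ole (G : zmodType) (le : rel G) (x y : option G) : bool :=
  match x, y with
  | _, None => true
  | None, Some _ => false
  | Some a, Some b => le a b
  end.
Definition omin (G : zmodType) (le : rel G) (x y : option G) : option G :=
  if ole le x y then x else y.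

(* A Krull valuation nu on K[x] with values in G u {oo} (G ordered by le).
   READING: nu^{-1}(oo) = {0} (nu(f) = oo iff f = 0), as needed for
   epsilon(g) to be defined. *)
Record krull_valuation (K : fieldType) (G : zmodType) (le : rel G)
    (nu : {poly K} -> option G) : Prop := KrullValuation {
  kv_group : ordered_group le;
  kv_zero : forall f, nu f = None <-> f = 0;
  kv_mul : forall f g, nu (f * g) = oadd (nu f) (nu g);
  kv_add : forall f g, ole le (omin le (nu f) (nu g)) (nu (f + g))
}.

(* Hasse derivatives: p^`N(b) = \sum_{i>=b} binom(i,b) a_i x^(i-b)
   (mathcomp's nderivn). *)

(* Elements of the divisible hull (G (x) Q) u {-oo}: Some (a, b) with
   b > 0 stands for a/b, None stands for -oo. *)
Definition frac_le (G : zmodType) (le : rel G) (x y : option (G * nat)) : bool :=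
  match x, y with
  | None, _ => true
  | Some _, None => false
  | Some (a, b), Some (c, d) => le (a *+ d) (c *+ b)
  end.

(* The b-th candidate (nu(g) - nu(d_b g))/b in the definition of epsilon
   (-oo when d_b g = 0, i.e. nu(d_b g) = oo). *)
Definition eps_term (K : fieldType) (G : zmodType) (nu : {poly K} -> option G)
    (g : {poly K}) (b : nat) : option (G * nat) :=
  match nu g, nu (g^`N(b)) with
  | Some a, Some d => Some (a - d, b)
  | _, _ => None
  end.

(* epsilon(g) >= epsilon(h), where
   epsilon(g) = max_{1<=b<=deg g} (nu(g) - nu(d_b g))/b  if deg g > 0,
   epsilon(g) = -oo  if g is constant.
   max_b A_b >= max_c B_c  is written out as  exists b, forall c, B_c <= A_b. *)
Definition eps_ge (K : fieldType) (G : zmodType) (le : rel G)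
    (nu : {poly K} -> option G) (g h : {poly K}) : Prop :=
  if (size g <= 1)%N then is_true (size h <= 1)%N
  else (size h <= 1)%N \/
       exists2 b : nat, (1 <= b <= (size g).-1)%N &
         forall c : nat, (1 <= c <= (size h).-1)%N ->
           frac_le le (eps_term nu h c) (eps_term nu g b).

Definition key_poly (K : fieldType) (G : zmodType) (le : rel G)
    (nu : {poly K} -> option G) (Q : {poly K}) : Prop :=
  Q \is monic /\
  forall g : {poly K}, g != 0 -> eps_ge le nu g Q ->
    ((size Q).-1 <= (size g).-1)%N.

(* The i-th coefficient g_i of the Q-expansion g = sum_i g_i Q^i with
   deg g_i < deg Q (for Q monic of positive degree). *)
Definition qexp_coef (K : fieldType) (Q g : {poly K}) (i : nat) : {poly K} :=
  (g %/ Q ^+ i) %% Q.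

(* Truncation nu_Q(g) = min_i nu(g_i Q^i); indices i >= size g give g_i = 0. *)
Definition truncation (K : fieldType) (G : zmodType) (le : rel G)
    (nu : {poly K} -> option G) (Q g : {poly K}) : option G :=
  \big[omin le/None]_(i < size g) nu (qexp_coef Q g i * Q ^+ i).

From mathcomp Require Import all_boot all_order all_algebra zify.
Set Implicit Arguments. Unset Strict Implicit. Unset Printing Implicit Defensive.
Import GRing.Theory.
Local Open Scope ring_scope.

(* Write eps(Q) = E/B, the maximum in the definition of eps(Q) being attained
   at the order B.  A nonzero h "lies below eps(Q)" if
   nu(d_j h) + j eps(Q) > nu(h) for all j >= 1, i.e. eps(h) < eps(Q).  Since Q
   is a key polynomial, every nonzero h of degree < deg Q lies below eps(Q),
   and by the Leibniz rule for Hasse derivatives so do products of such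
   polynomials.  Comparing B-th Hasse derivatives then shows that for such a
   product h = a Q + c (division by Q) one has nu(h) < nu(a Q), hence
   nu(c) = nu(h).  Iterating this division, a product f of polynomials of
   degree < deg Q has an expansion f = sum_j e_j Q^j with deg e_j < deg Q,
   nu(e_0) = nu(f) and nu(e_j Q^j) >= nu(f) for all j.  Summing these
   expansions for the f_i Q^i gives the Q-expansion of f, represented as a
   polynomial P in K[x][Y] with P(Q) = f, whose terms have values >= the
   minimum of the nu(f_i Q^i), and equal to it for the least index where it
   is attained.  The truncation of P(Q) is then that minimum. *)

Section OrderedGroup.
Variables (G : zmodType) (le : rel G).
Hypothesis hG : ordered_group le.

Lemma gle_refl x : le x x. Proof. exact: (og_refl hG). Qed.

Lemma gle_trans x y z : le x y -> le y z -> le x z.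
Proof. exact: (og_trans hG). Qed.

Lemma gle_anti x y : le x y -> le y x -> x = y.
Proof. by move=> h1 h2; apply: (og_anti hG); rewrite h1 h2. Qed.

Lemma gle_total x y : le x y || le y x. Proof. exact: (og_total hG). Qed.

Lemma gle_nle x y : ~~ le x y -> le y x.
Proof. by move=> h; move: (gle_total x y); rewrite (negbTE h). Qed.

Lemma gle_add2r a b c : le a b -> le (a + c) (b + c). Proof. exact: (og_add hG). Qed.

Lemma gle_add2l a b c : le a b -> le (c + a) (c + b).
Proof. by move=> h; rewrite ![c + _]addrC; apply: gle_add2r. Qed.

Lemma gle_add a b c d : le a b -> le c d -> le (a + c) (b + d).
Proof. by move=> h1 h2; apply: (gle_trans (gle_add2r c h1)); apply: gle_add2l. Qed.

Lemma gle_add2rE a b c : le (a + c) (b + c) = le a b.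
Proof.
apply/idP/idP => [h|]; last exact: gle_add2r.
by have := gle_add2r (- c) h; rewrite !addrK.
Qed.

Lemma glt_add a b c d : ~~ le b a -> le c d -> ~~ le (b + d) (a + c).
Proof.
move=> h1 h2; apply/negP => h3; case/negP: h1.
by rewrite -(gle_add2rE _ _ d); apply: (gle_trans h3); apply: gle_add2l.
Qed.

Lemma gle_muln a b n : le a b -> le (a *+ n) (b *+ n).
Proof.
move=> h; elim: n => [|n IH]; first by rewrite !mulr0n gle_refl.
by rewrite !mulrS; apply: gle_add.
Qed.

Lemma gle_muln2 a b n : (0 < n)%N -> le (a *+ n) (b *+ n) = le a b.
Proof.
case: n => // n _; apply/idP/idP; last exact: gle_muln.
apply: contraLR => hab; elim: n => [|n IH]; first by rewrite !mulr1n.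
by rewrite (mulrS b) (mulrS a); apply: glt_add => //; apply/gle_muln/gle_nle.
Qed.
End OrderedGroup.

Section ExtendedOrder.
Variables (G : zmodType) (le : rel G).
Hypothesis hG : ordered_group le.

Definition olt (x y : option G) := ~~ ole le y x.

Lemma ole_refl x : ole le x x. Proof. by case: x => //= a; apply: gle_refl. Qed.

Lemma ole_trans x y z : ole le x y -> ole le y z -> ole le x z.
Proof. by case: x; case: y; case: z => //= a b c; apply: gle_trans. Qed.

Lemma ole_anti x y : ole le x y -> ole le y x -> x = y.
Proof. by case: x; case: y => //= a b h1 h2; rewrite (gle_anti hG h2 h1). Qed.

Lemma ole_nle x y : ~~ ole le x y -> ole le y x.
Proof. by case: x; case: y => //= a b; apply: gle_nle. Qed.

Lemma ole_oo x : ole le x None. Proof. by case: x. Qed.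

Lemma olt_ole_trans x y z : olt x y -> ole le y z -> olt x z.
Proof. by move=> h1 h2; apply: contra h1 => h3; apply: ole_trans h2 h3. Qed.

Lemma omin_l x y : ole le (omin le x y) x.
Proof. by rewrite /omin; case: ifP => h; [apply: ole_refl | apply/ole_nle/negbT]. Qed.

Lemma omin_r x y : ole le (omin le x y) y.
Proof. by rewrite /omin; case: ifP => // _; apply: ole_refl. Qed.

Lemma omin_glb z x y : ole le z x -> ole le z y -> ole le z (omin le x y).
Proof. by rewrite /omin; case: ifP. Qed.

Lemma omin_cases x y : omin le x y = x \/ omin le x y = y.
Proof. by rewrite /omin; case: ifP; [left|right]. Qed.

Lemma oadd_le x y z : ole le x y -> ole le (oadd x z) (oadd y z).
Proof. by case: x; case: y; case: z => //= a b c; apply: gle_add2r. Qed.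

Lemma oaddC (x y : option G) : oadd x y = oadd y x.
Proof. by case: x; case: y => //= a b; rewrite addrC. Qed.

Lemma ominA x y z : omin le x (omin le y z) = omin le (omin le x y) z.
Proof.
apply: ole_anti; apply: omin_glb.
- by apply: omin_glb; [apply: omin_l | apply: ole_trans (omin_r _ _) (omin_l _ _)].
- exact: ole_trans (omin_r _ _) (omin_r _ _).
- exact: ole_trans (omin_l _ _) (omin_l _ _).
- by apply: omin_glb; [apply: ole_trans (omin_l _ _) (omin_r _ _) | apply: omin_r].
Qed.

Lemma omin_ool x : omin le None x = x.
Proof.
by apply: ole_anti; [apply: omin_r | apply: omin_glb; [apply: ole_oo | apply: ole_refl]].
Qed.

Lemma omin_oor x : omin le x None = x.
Proof.
by apply: ole_anti; [apply: omin_l | apply: omin_glb; [apply: ole_refl | apply: ole_oo]].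
Qed.

Lemma bigomin_recr (F : nat -> option G) t :
  \big[omin le/None]_(i < t.+1) F i = omin le (\big[omin le/None]_(i < t) F i) (F t).
Proof.
elim: t F => [|t IH] F; first by rewrite big_ord_recl !big_ord0 omin_oor omin_ool.
by rewrite big_ord_recl (IH (fun i => F i.+1)) (big_ord_recl t) ominA.
Qed.

Lemma bigomin_lb (I : eqType) (r : seq I) (P : pred I) (F : I -> option G) i :
  i \in r -> P i -> ole le (\big[omin le/None]_(j <- r | P j) F j) (F i).
Proof.
elim: r => // a r IH; rewrite inE big_cons => /orP [/eqP-> ->|ir Pi].
  exact: omin_l.
by case: ifP => _; [apply: ole_trans (omin_r _ _) (IH ir Pi) | apply: IH].
Qed.

Lemma bigomin_attained (I : eqType) (r : seq I) (P : pred I) (F : I -> option G) :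
  let m := \big[omin le/None]_(j <- r | P j) F j in
  m = None \/ exists2 i, (i \in r) && P i & m = F i.
Proof.
elim: r => [|a r IH] /=; first by rewrite big_nil; left.
have IH' : \big[omin le/None]_(j <- r | P j) F j = None \/
    exists2 i, (i \in a :: r) && P i & \big[omin le/None]_(j <- r | P j) F j = F i.
  by case: IH => [|[i /andP [ir Pi] e]]; [left | right; exists i; rewrite ?inE ?ir ?orbT].
rewrite big_cons; case: ifP => Pa //.
by case: (omin_cases (F a) (\big[omin le/None]_(j <- r | P j) F j)) => ->;
  [right; exists a; rewrite ?inE ?eqxx | ].
Qed.

Lemma bigomin_eq (I : eqType) (r : seq I) (P : pred I) (F : I -> option G) m :
  (forall i, i \in r -> P i -> ole le m (F i)) ->
  (m = None \/ exists2 i, (i \in r) && P i & F i = m) ->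
  \big[omin le/None]_(j <- r | P j) F j = m.
Proof.
move=> lb att; apply: ole_anti; last first.
  case: (bigomin_attained r P F) => [->|[i /andP [ir Pi] ->]]; [exact: ole_oo | exact: lb].
by case: att => [->|[i /andP [ir Pi] <-]]; [exact: ole_oo | exact: bigomin_lb].
Qed.
End ExtendedOrder.

(* The Leibniz rule for Hasse derivatives, obtained from the Taylor map
   p(X) |-> p(X + Y), whose Y-coefficients are the Hasse derivatives of p and
   which is multiplicative. *)
Section HasseLeibniz.
Variable R : comNzRingType.

Lemma horner_polyC_X (p : {poly R}) : (p^:P).['X] = p.
Proof.
elim/poly_ind: p => [|p c IH]; first by rewrite rmorph0 horner0.
by rewrite rmorphD rmorphM /= map_polyX map_polyC /= hornerMXaddC IH.
Qed.

Definition taylor_shift (p : {poly R}) : {poly {poly R}} := ((p^:P)^:P).[('X)%:P + 'X].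

Lemma coef_taylor_shift (p : {poly R}) k : (taylor_shift p)`_k = p^`N(k).
Proof.
have -> : taylor_shift p = \poly_(i < size p) p^`N(i).
  rewrite /taylor_shift nderiv_taylor; last exact: mulrC.
  rewrite !size_map_polyC poly_def; apply: eq_bigr => i _.
  by rewrite !nderivn_map horner_map /= horner_polyC_X mul_polyC.
by rewrite coef_poly; case: ltnP => // h; rewrite nderivn_poly0.
Qed.

Lemma nderivnM (p q : {poly R}) k :
  (p * q)^`N(k) = \sum_(i < k.+1) p^`N(i) * q^`N(k - i).
Proof.
rewrite -coef_taylor_shift /taylor_shift !rmorphM /= hornerM coefM.
by apply: eq_bigr => i _; rewrite !coef_taylor_shift.
Qed.
End HasseLeibniz.

Section Valuation.
Variables (K : fieldType) (G : zmodType) (le : rel G) (nu : {poly K} -> option G).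
Hypothesis hnu : krull_valuation le nu.
Let hG := kv_group hnu.

Lemma nu0 : nu 0 = None. Proof. exact/(kv_zero hnu). Qed.

Lemma nu_neq0 p : p != 0 -> exists a, nu p = Some a.
Proof.
move=> p0; case e: (nu p) => [a|]; first by exists a.
by move/(kv_zero hnu): e p0 => ->; rewrite eqxx.
Qed.

Lemma nuM p q : nu (p * q) = oadd (nu p) (nu q). Proof. exact: (kv_mul hnu). Qed.

Lemma nu1 : nu 1 = Some 0.
Proof.
have [a ea] := nu_neq0 (oner_neq0 {poly K}).
have := nuM 1 1; rewrite mulr1 ea /= => -[] /esym /eqP.
by rewrite -subr_eq0 addrK => /eqP->.
Qed.

Lemma nuN p : nu (- p) = nu p.
Proof.
have [b eb] : exists b, nu (-1) = Some b by apply: nu_neq0; rewrite oppr_eq0 oner_neq0.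
have b0 : b = 0.
  have := nuM (-1) (-1); rewrite mulrNN mulr1 nu1 eb /= => -[] e.
  by case/orP: (gle_total hG 0 b) => h; apply: (gle_anti hG) => //;
    have := gle_add2l hG b h; rewrite addr0 -e.
by rewrite -mulN1r nuM eb b0; case: (nu p) => //= a; rewrite add0r.
Qed.

Lemma nu_sum_P (P : option G -> bool) (I : Type) (r : seq I) (Pr : pred I)
    (F : I -> {poly K}) :
  (forall x y, ole le x y -> P x -> P y) -> P None ->
  (forall i, Pr i -> P (nu (F i))) -> P (nu (\sum_(i <- r | Pr i) F i)).
Proof.
move=> up PN hF; apply: (big_ind (fun p => P (nu p))) => //; first by rewrite nu0.
move=> x y Px Py; apply: up (kv_add hnu x y) _.
by case: (omin_cases le (nu x) (nu y)) => ->.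
Qed.

Lemma nuD_ge z p q : ole le z (nu p) -> ole le z (nu q) -> ole le z (nu (p + q)).
Proof. by move=> h1 h2; apply: (ole_trans hG) (kv_add hnu p q); apply: omin_glb. Qed.

Lemma nuD_lt p q : olt le (nu p) (nu q) -> nu (p + q) = nu p.
Proof.
move=> h; apply: (ole_anti hG); last first.
  have hqp : ole le (nu p) (nu q) by apply: (ole_nle hG).
  by apply: (ole_trans hG) (kv_add hnu p q); rewrite /omin hqp (ole_refl hG).
have := kv_add hnu (p + q) (- q); rewrite addrK nuN /omin.
by case: ifP => // _ h'; move: h; rewrite /olt h'.
Qed.
End Valuation.

Lemma ex_max (T : Type) (R : T -> T -> bool) (f : nat -> T) N :
  (forall i j k, R (f i) (f j) -> R (f j) (f k) -> R (f i) (f k)) ->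
  (forall i j, R (f i) (f j) || R (f j) (f i)) ->
  exists2 b, (b <= N)%N & forall c, (c <= N)%N -> R (f c) (f b).
Proof.
move=> tr to; have refl i : R (f i) (f i) by have := to i i; rewrite orbb.
elim: N => [|N [b bN IH]]; first by exists 0%N => // c; rewrite leqn0 => /eqP->.
case/orP: (to b N.+1) => h; last first.
  by exists b => [|c]; [apply: leqW | rewrite leq_eqVlt => /orP [/eqP->|/IH]].
by exists N.+1 => // c; rewrite leq_eqVlt => /orP [/eqP->//|/IH/tr]; apply.
Qed.

Section Fractions.
Variables (G : zmodType) (le : rel G).
Hypothesis hG : ordered_group le.

Definition pos_denom (x : option (G * nat)) := if x is Some (_, b) then (0 < b)%N else true.

Lemma frac_le_total x y : frac_le le x y || frac_le le y x.
Proof. by case: x => [[a b]|]; case: y => [[c d]|] //=; apply: gle_total. Qed.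

Lemma frac_le_trans x y z : pos_denom x -> pos_denom y -> pos_denom z ->
  frac_le le x y -> frac_le le y z -> frac_le le x z.
Proof.
case: x => [[a b]|] //; case: y => [[c d]|] //; case: z => [[e f]|] //= b0 d0 f0 h1 h2.
rewrite -(gle_muln2 hG _ _ d0) -!mulrnA [(f * d)%N]mulnC [(b * d)%N]mulnC !mulrnA.
apply: (gle_trans hG (gle_muln hG f h1)).
by rewrite -!mulrnA [(b * f)%N]mulnC !mulrnA; apply: gle_muln.
Qed.
End Fractions.

Section EpsilonOfKeyPolynomial.
Variables (K : fieldType) (G : zmodType) (le : rel G) (nu : {poly K} -> option G)
  (Q : {poly K}).
Hypothesis hnu : krull_valuation le nu.
Hypothesis Q_monic : Q \is monic.
Hypothesis hn : (0 < (size Q).-1)%N.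
Let hG := kv_group hnu.
Let n := (size Q).-1.

Lemma eps_term_pos_denom g b : pos_denom (eps_term nu g b.+1).
Proof. by rewrite /eps_term; case: (nu g) => // a; case: (nu _). Qed.

(* The top Hasse derivative d_n Q is the leading coefficient 1. *)
Lemma nderivn_top_neq0 : Q^`N(n) != 0.
Proof.
apply: contraTneq isT => e; have := congr1 (fun p : {poly K} => p`_0) e.
rewrite /= coef_nderivn addn0 binn mulr1n coef0 -/(lead_coef Q) (monicP Q_monic).
by move/eqP; rewrite oner_eq0.
Qed.

Lemma eps_attained : exists q B E, [/\ nu Q = Some q, (0 < B)%N,
  nu (Q^`N(B)) = Some (q - E) &
  forall c, (1 <= c <= n)%N -> frac_le le (eps_term nu Q c) (Some (E, B))].
Proof.
have [b bn hb] := ex_max (R := frac_le le) (f := fun c => eps_term nu Q c.+1) n.-1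
  (fun i j k => frac_le_trans hG (eps_term_pos_denom _ _) (eps_term_pos_denom _ _)
                  (eps_term_pos_denom _ _))
  (fun i j => frac_le_total hG _ _).
have [q eq] := nu_neq0 hnu (monic_neq0 Q_monic).
have [dn edn] := nu_neq0 hnu nderivn_top_neq0.
have := hb n.-1 (leqnn _); rewrite prednK // /eps_term eq edn.
case ed: (nu (Q^`N(b.+1))) => [d|] // _.
exists q, b.+1, (q - d); split => //; first by rewrite opprB addrC subrK.
move=> c /andP [c1 cn]; have := hb c.-1; rewrite prednK // /eps_term eq ed => hc.
by apply: hc; lia.
Qed.
End EpsilonOfKeyPolynomial.

(* Values are compared with the lines of slope
   eps(Q) after multiplying through by B, so that no division is needed. *)
Section BelowEpsilon.
Variables (K : fieldType) (G : zmodType) (le : rel G) (nu : {poly K} -> option G)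
  (Q : {poly K}) (q : G) (B : nat) (E : G).
Hypothesis hnu : krull_valuation le nu.
Hypothesis hkey : key_poly le nu Q.
Hypothesis hn : (0 < (size Q).-1)%N.
Hypothesis hq : nu Q = Some q.
Hypothesis hB : (0 < B)%N.
Hypothesis hQB : nu (Q^`N(B)) = Some (q - E).
Hypothesis eps_max : forall c, (1 <= c <= (size Q).-1)%N ->
  frac_le le (eps_term nu Q c) (Some (E, B)).
Let hG := kv_group hnu.

(* above t x j : x + j eps(Q) > t/B, i.e. x B + j E > t (oo lies above);
   wabove is the weak version. *)
Definition above (t : G) (x : option G) (j : nat) :=
  if x is Some d then ~~ le (d *+ B + E *+ j) t else true.
Definition wabove (t : G) (x : option G) (j : nat) :=
  if x is Some d then le t (d *+ B + E *+ j) else true.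

(* h is nonzero and eps(h) < eps(Q): nu(d_j h) + j eps(Q) > nu(h) for j > 0. *)
Definition below_eps (h : {poly K}) := exists2 a, nu h = Some a &
  forall j, (0 < j)%N -> above (a *+ B) (nu (h^`N(j))) j.

Lemma above_ole t x y j : ole le x y -> above t x j -> above t y j.
Proof.
case: x => [a|]; case: y => [b|] //= h1; apply: contra => h3.
by apply: (gle_trans hG) h3; rewrite (gle_add2rE hG); apply: gle_muln.
Qed.

Lemma above_le t t' x j : le t' t -> above t x j -> above t' x j.
Proof. by case: x => [d|] //= h1; apply: contra => h3; apply: (gle_trans hG) h3 h1. Qed.

Lemma above_nuD t x y j :
  above t (nu x) j -> above t (nu y) j -> above t (nu (x + y)) j.
Proof.
move=> hx hy; apply: above_ole (kv_add hnu x y) _.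
by case: (omin_cases le (nu x) (nu y)) => ->.
Qed.

(* Points above lines add up along the Leibniz rule. *)
Lemma wabove_above_add t1 t2 x y i k :
  wabove t1 x i -> above t2 y k -> above (t1 + t2) (oadd x y) (i + k).
Proof.
case: x => [d1|]; case: y => [d2|] //= h1 h2.
rewrite mulrnDl mulrnDr addrACA -[t1 + t2]addrC -[_ + (d2 *+ B + _)]addrC.
exact: glt_add.
Qed.

Lemma above_wabove_add t1 t2 x y i k :
  above t1 x i -> wabove t2 y k -> above (t1 + t2) (oadd x y) (i + k).
Proof. by move=> h1 h2; rewrite addrC oaddC addnC; apply: wabove_above_add. Qed.

Lemma wabove_nderivn0 (p : {poly K}) a : nu p = Some a -> wabove (a *+ B) (nu (p^`N(0))) 0.
Proof. by rewrite nderivn0 => ->; rewrite /= mulr0n addr0 (gle_refl hG). Qed.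

(* By maximality of E/B, Q itself lies weakly below eps(Q) at every order. *)
Lemma wabove_Q c : wabove (q *+ B) (nu (Q^`N(c))) c.
Proof.
case: c => [|c]; first exact: wabove_nderivn0.
have [hc|hc] := leqP c.+1 (size Q).-1; last first.
  by rewrite nderivn_poly0 ?(nu0 hnu) //; lia.
have := @eps_max c.+1 hc; rewrite /eps_term hq; case: (nu _) => [d|] //= h.
by have := gle_add2r hG (d *+ B) h; rewrite mulrnBl subrK addrC.
Qed.

Lemma below_eps_wabove p : below_eps p ->
  exists2 a, nu p = Some a & forall j, wabove (a *+ B) (nu (p^`N(j))) j.
Proof.
case=> a ea h; exists a => // -[|j]; first exact: wabove_nderivn0.
by have := h j.+1 isT; case: (nu _) => //= d; apply: gle_nle.
Qed.

Lemma below_eps_above p t j : below_eps p -> ole le (Some t) (nu p) -> (0 < j)%N ->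
  above (t *+ B) (nu (p^`N(j))) j.
Proof.
by case=> a -> hp /= ta j0; apply: above_le (hp j j0); apply: gle_muln.
Qed.

Lemma above_olt t x j v : above t x j -> le (v *+ B + E *+ j) t -> olt le (Some v) x.
Proof.
case: x => [d|] //= h1 h2; apply: contra h1 => h3.
by apply: (gle_trans hG) h2; rewrite (gle_add2rE hG); apply: gle_muln.
Qed.

(* This is where Q being a key polynomial is used: eps(h) >= eps(Q) would
   force deg h >= deg Q. *)
Lemma below_eps_small (h : {poly K}) : h != 0 -> (size h < size Q)%N -> below_eps h.
Proof.
move=> h0 hs; have [a ea] := nu_neq0 hnu h0; exists a => // j j0.
have [hj|hj] := leqP (size h) j; first by rewrite nderivn_poly0 ?(nu0 hnu).
case ed: (nu (h^`N(j))) => [d|] //=; apply/negP => contra.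
suff : eps_ge le nu h Q by move/(hkey.2 h h0); lia.
rewrite /eps_ge ifN; last by rewrite -ltnNge; lia.
right; exists j; first by apply/andP; split; lia.
move=> c hc; apply: (frac_le_trans hG _ _ _ (eps_max hc)) => //.
- by case: c hc => // c _; apply: eps_term_pos_denom.
- by rewrite /eps_term ea ed /=.
rewrite /eps_term ea ed /= -(gle_add2rE hG _ _ (d *+ B)) mulrnBl subrK.
by rewrite addrC.
Qed.

Lemma below_eps_mul p1 p2 : below_eps p1 -> below_eps p2 -> below_eps (p1 * p2).
Proof.
move=> b1 b2; have [a1 e1 w1] := below_eps_wabove b1.
have [a2 e2 w2] := below_eps_wabove b2.
have h1 j := below_eps_above (t := a1) (j := j) b1.
have h2 j := below_eps_above (t := a2) (j := j) b2.
rewrite e1 /= (gle_refl hG) in h1; rewrite e2 /= (gle_refl hG) in h2.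
exists (a1 + a2); first by rewrite (nuM hnu) e1 e2.
move=> j j0; rewrite nderivnM.
apply: (nu_sum_P hnu (P := fun x => above ((a1 + a2) *+ B) x j)) => //.
  by move=> x y; apply: above_ole.
move=> [[|i] /= ij] _; rewrite (nuM hnu) mulrnDl.
  by have := wabove_above_add (w1 0%N) (h2 j isT j0); rewrite subn0.
by have := above_wabove_add (h1 i.+1 isT isT) (w2 (j - i.+1)%N); rewrite subnKC.
Qed.

(* For a nonzero a lying below eps(Q), nu(d_B(a Q)) = nu(a) + nu(d_B Q): in
   the Leibniz expansion, the term a d_B Q lies on the line of slope eps(Q)
   through nu(a Q), all the others strictly above it. *)
Lemma nu_nderivB_mulQ a al : below_eps a -> nu a = Some al ->
  nu ((a * Q)^`N(B)) = Some (al + (q - E)).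
Proof.
move=> ba ea; rewrite nderivnM big_ord_recl subn0 nderivn0 (nuD_lt hnu) (nuM hnu) ea hQB //.
apply: (above_olt (t := (al + q) *+ B) (j := B)); last first.
  by rewrite -mulrnDl addrA subrK (gle_refl hG).
apply: (nu_sum_P hnu (P := fun x => above ((al + q) *+ B) x B)) => //.
  by move=> x y; apply: above_ole.
move=> [i /= iB] _; rewrite (nuM hnu) mulrnDl.
have ha : ole le (Some al) (nu a) by rewrite ea /= (gle_refl hG).
have := above_wabove_add (below_eps_above ba ha (isT : 0 < bump 0 i)%N)
  (wabove_Q (B - bump 0 i)).
by rewrite subnKC.
Qed.

(* The heart of the argument: if h = a Q + c lies below eps(Q) and the
   quotient a has degree < deg Q, then nu(h) < nu(a Q).  Otherwise the B-th
   Hasse derivative of a Q = h - c would lie strictly above the line through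
   nu(a Q), contradicting nu_nderivB_mulQ. *)
Lemma nu_lt_quotient h : below_eps h -> (size (h %/ Q)%R < size Q)%N ->
  olt le (nu h) (nu (h %/ Q * Q)).
Proof.
move=> bh sa; set a := h %/ Q; set c := h %% Q.
have [eta eh _] := bh.
have [->|a0] := eqVneq a 0; first by rewrite mul0r (nu0 hnu) eh.
apply/negP => hle.
have ba := below_eps_small a0 sa; have [al ea _] := ba.
have eaQ : nu (a * Q) = Some (al + q) by rewrite (nuM hnu) ea hq.
have ec : c = h - a * Q.
  by apply/eqP; rewrite eq_sym subr_eq addrC /a /c -divp_eq.
have hge : ole le (Some (al + q)) (nu h) by rewrite -eaQ.
have above_dB : above ((al + q) *+ B) (nu ((a * Q)^`N(B))) B.
  have -> : a * Q = h - c by rewrite ec opprB addrC subrK.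
  rewrite nderivnB; apply: above_nuD; first exact: below_eps_above.
  rewrite (nuN hnu); have [->|c0] := eqVneq c 0.
    by rewrite nderivn_poly0 ?size_poly0 // (nu0 hnu).
  apply: below_eps_above => //.
    by apply: below_eps_small; rewrite // /c ltn_modp (monic_neq0 hkey.1).
  rewrite ec; apply: (nuD_ge hnu) => //.
  by rewrite (nuN hnu) eaQ /= (gle_refl hG).
move: above_dB; rewrite (nu_nderivB_mulQ ba ea) /= -mulrnDl -addrA subrK.
by rewrite (gle_refl hG).
Qed.

Lemma size_quotient_small (r1 r2 : {poly K}) :
  (size r1 < size Q)%N -> (size r2 < size Q)%N -> (size (r1 * r2 %/ Q)%R < size Q)%N.
Proof.
move=> s1 s2; rewrite size_divp ?monic_neq0 ?hkey.1 //.
apply: leq_ltn_trans (leq_sub2r _ (size_polyMleq r1 r2)) _.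
by move: (size r1) (size r2) (size Q) s1 s2 => b c d; lia.
Qed.

Definition small_division := forall r1 r2 : {poly K},
  (size r1 < size Q)%N -> (size r2 < size Q)%N ->
  [/\ (size (r1 * r2 %/ Q)%R < size Q)%N, nu (r1 * r2 %% Q) = nu (r1 * r2) &
      ole le (nu (r1 * r2)) (nu (r1 * r2 %/ Q * Q))].

Lemma key_small_division : small_division.
Proof.
move=> r1 r2 s1 s2; have sa := size_quotient_small s1 s2.
have [h0|h0] := eqVneq (r1 * r2) 0.
  by move: sa; rewrite h0 mod0p div0p mul0r (ole_refl hG).
have bh : below_eps (r1 * r2).
  by apply: below_eps_mul; apply: below_eps_small => //;
    apply: contraNneq h0 => ->; rewrite ?mul0r ?mulr0.
have lt := nu_lt_quotient bh sa; split => //; last exact: (ole_nle hG).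
have -> : r1 * r2 %% Q = r1 * r2 + - (r1 * r2 %/ Q * Q).
  by apply/eqP; rewrite eq_sym subr_eq addrC -divp_eq.
by rewrite (nuD_lt hnu) // (nuN hnu).
Qed.
End BelowEpsilon.

(* Expansions in powers of Q, represented as polynomials P in K[x][Y] with
   P(Q) = h.  This part only uses the division property small_division. *)
Section Expansions.
Variables (K : fieldType) (G : zmodType) (le : rel G) (nu : {poly K} -> option G)
  (Q : {poly K}).
Hypothesis hnu : krull_valuation le nu.
Hypothesis hn : (0 < (size Q).-1)%N.
Hypothesis hdiv : small_division le nu Q.
Let hG := kv_group hnu.

Lemma Q_neq0 : Q != 0.
Proof. by apply: contraTneq hn => ->; rewrite size_poly0. Qed.

Lemma size0_lt_Q : (size (0%R : {poly K}) < size Q)%N.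
Proof. by rewrite size_poly0; lia. Qed.

Definition reduced (P : {poly {poly K}}) := forall k, (size (P`_k)%R < size Q)%N.

Lemma reducedD P1 P2 : reduced P1 -> reduced P2 -> reduced (P1 + P2).
Proof.
by move=> r1 r2 k; rewrite coefD (leq_ltn_trans (size_polyD _ _)) // gtn_max r1 r2.
Qed.

Lemma reducedMXn P t : reduced P -> reduced (P * 'X^t).
Proof. by move=> rP k; rewrite coefMXn; case: ifP => _ //; apply: size0_lt_Q. Qed.

Lemma qexp_coef_horner P : reduced P -> forall k, qexp_coef Q P.[Q] k = P`_k.
Proof.
elim/poly_ind: P => [|P c IH] rP k.
  by rewrite horner0 coef0 /qexp_coef div0p mod0p.
have rP' : reduced P by move=> j; have := rP j.+1; rewrite coefD coefMX coefC /= addr0.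
have sc : (size c < size Q)%N by have := rP 0%N; rewrite coefD coefMX coefC /= add0r.
rewrite /qexp_coef hornerMXaddC coefD coefMX coefC.
case: k => [|k] /=; first by rewrite add0r expr0 divp1 modp_addl_mul_small.
by rewrite addr0 exprS -divp_divl divp_addl_mul_small //; apply: IH.
Qed.

Lemma qexp_coef_large (f : {poly K}) k : (size f <= k)%N -> qexp_coef Q f k = 0.
Proof.
move=> hk; rewrite /qexp_coef divp_small ?mod0p //.
have d0 : (0 < size (Q ^+ k))%N by rewrite size_poly_gt0 expf_neq0 ?Q_neq0.
have dm := size_exp Q k.
have km : (k <= (size Q).-1 * k)%N by rewrite leq_pmull.
move: (size (Q ^+ k)) ((size Q).-1 * k)%N d0 dm km => d m d0 <- km.
by rewrite (leq_ltn_trans hk) // (leq_ltn_trans km) // ltn_predL.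
Qed.

Lemma truncation_horner P m : reduced P ->
  (forall k, ole le m (nu (P`_k * Q ^+ k))) ->
  (m = None \/ exists k, nu (P`_k * Q ^+ k) = m) ->
  truncation le nu Q P.[Q] = m.
Proof.
move=> rP lb att; rewrite /truncation; apply: (bigomin_eq hG) => [i _ _|].
  by rewrite qexp_coef_horner.
case: att => [|[k ek]]; first by left.
case: m lb ek => [m|] lb ek; last by left.
have kN : (k < size P.[Q])%N.
  rewrite ltnNge; apply: contraTN isT => /qexp_coef_large.
  by rewrite qexp_coef_horner // => Pk0; move: ek; rewrite Pk0 mul0r (nu0 hnu).
by right; exists (Ordinal kN); rewrite ?mem_index_enum // /= qexp_coef_horner.
Qed.

Definition adapted (h : {poly K}) (P : {poly {poly K}}) :=
  [/\ reduced P, P.[Q] = h, nu P`_0 = nu h &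
      forall k, ole le (nu h) (nu (P`_k * Q ^+ k))].

Lemma adapted0 : adapted 0 0.
Proof.
split => [k|||k]; rewrite ?coef0 ?horner0 //; first exact: size0_lt_Q.
by rewrite mul0r (ole_refl hG).
Qed.

Lemma adapted1 : adapted 1 1.
Proof.
split => [[|k]|||[|k]]; rewrite ?coef1 ?hornerC //=.
- by rewrite mulr1n size_poly1; move: hn; case: (size Q) => [|[|j]].
- by rewrite mulr0n; apply: size0_lt_Q.
- by rewrite mulr1n expr0 mulr1 (ole_refl hG).
by rewrite mulr0n mul0r (nu0 hnu) ole_oo.
Qed.

(* Multiplying by p of degree < deg Q: divide each p e_j by Q and carry the
   quotient to the next power of Q; small_division keeps the expansion
   adapted. *)
Lemma adapted_mul (p h : {poly K}) (P : {poly {poly K}}) :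
  (size p < size Q)%N -> adapted h P -> exists P', adapted (p * h) P'.
Proof.
move=> sp [rP eh e0 lb].
pose A := map_poly (fun c => (p * c) %/ Q) P.
pose C := map_poly (fun c => (p * c) %% Q) P.
have coefA k : A`_k = p * P`_k %/ Q by rewrite coef_map_id0 // mulr0 div0p.
have coefC k : C`_k = p * P`_k %% Q by rewrite coef_map_id0 // mulr0 mod0p.
have coefP' k : (C + A * 'X)`_k =
    p * P`_k %% Q + (if k is k'.+1 then p * P`_k' %/ Q else 0).
  by rewrite coefD coefMX coefC; case: k => [|k] //=; rewrite coefA.
have D k := hdiv sp (rP k).
have key k : ole le (nu (p * h)) (nu (p * P`_k * Q ^+ k)).
  by rewrite -mulrA !(nuM hnu p) oaddC [oadd (nu p) _]oaddC; apply: (oadd_le hG).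
exists (C + A * 'X); split.
- move=> k; rewrite coefP' (leq_ltn_trans (size_polyD _ _)) // gtn_max ltn_modp Q_neq0.
  by case: k => [|k]; [apply: size0_lt_Q | case: (D k)].
- have splitP : p%:P * P = A * Q%:P + C.
    by apply/polyP => k; rewrite coefCM coefD coefMC coefA coefC -divp_eq.
  by rewrite hornerD hornerMX -eh -hornerCM splitP hornerD hornerM hornerC addrC.
- by rewrite coefP' addr0; case: (D 0%N) => _ -> _; rewrite !(nuM hnu) e0.
move=> k; rewrite coefP' mulrDl; apply: (nuD_ge hnu).
  by case: (D k) => _ e _; rewrite (nuM hnu (_ %% Q)) e -(nuM hnu); apply: key.
case: k => [|k]; first by rewrite mul0r (nu0 hnu) ole_oo.
rewrite exprS mulrA; apply: (ole_trans hG (key k)).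
by case: (D k) => _ _; rewrite !(nuM hnu); apply: (oadd_le hG).
Qed.

Lemma adapted_prod (ps : seq {poly K}) :
  all (fun p : {poly K} => ((size p).-1 < (size Q).-1)%N) ps ->
  exists P, adapted (\prod_(p <- ps) p) P.
Proof.
elim: ps => [|p ps IH]; first by rewrite big_nil; exists 1; apply: adapted1.
rewrite big_cons /= => /andP [hp /IH [P hP]]; apply: adapted_mul hP.
by move: hp hn; case: (size p) => [|k]; case: (size Q) => [|[|j]].
Qed.

Lemma expansion_partial_sum (F : nat -> {poly K}) t :
  (forall i, (i < t)%N -> exists P, adapted (F i) P) ->
  let m := \big[omin le/None]_(i < t) nu (F i * Q ^+ i) in
  exists P, [/\ reduced P, P.[Q] = \sum_(i < t) F i * Q ^+ i,
    forall k, ole le m (nu (P`_k * Q ^+ k)) &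
    m = None \/ exists2 k, (k < t)%N & nu (P`_k * Q ^+ k) = m].
Proof.
elim: t => [|t IH] hF /=.
  exists 0; rewrite !big_ord0; split => [k||k|]; rewrite ?coef0 ?horner0 //.
  - exact: size0_lt_Q.
  - by rewrite mul0r (nu0 hnu).
  - by left.
have [P [rP eP lbP attP]] := IH (fun i hi => hF i (leqW hi)).
have [R [rR eR e0R lbR]] := hF t (leqnn _).
set m := \big[omin le/None]_(i < t) nu (F i * Q ^+ i).
set v := nu (F t * Q ^+ t).
have lb_shift k : ole le v (nu ((R * 'X^t)`_k * Q ^+ k)).
  rewrite coefMXn; case: ltnP => [_|tk]; first by rewrite mul0r (nu0 hnu) ole_oo.
  rewrite -(subnK tk) exprD mulrA (nuM hnu _ (Q ^+ t)) /v (nuM hnu (F t)) subnK //.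
  exact: (oadd_le hG).
exists (P + R * 'X^t); rewrite (bigomin_recr hG (fun i => nu (F i * Q ^+ i))) -/m -/v; split.
- by apply: reducedD => //; apply: reducedMXn.
- by rewrite big_ord_recr /= hornerD hornerM hornerXn eP eR.
- move=> k; rewrite coefD mulrDl; apply: (nuD_ge hnu).
    exact: (ole_trans hG (omin_l hG _ _) (lbP k)).
  exact: (ole_trans hG (omin_r hG _ _) (lb_shift k)).
rewrite /omin; case: ifP => [_|hmv].
  case: attP => [|[k kt ek]]; first by left.
  by right; exists k; rewrite 1?leqW // coefD coefMXn kt addr0.
right; exists t => //; rewrite coefD coefMXn ltnn subnn mulrDl addrC (nuD_lt hnu).
  by rewrite (nuM hnu) e0R -(nuM hnu).
rewrite (nuM hnu R`_0) e0R -(nuM hnu); apply: (olt_ole_trans hG) (lbP t).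
by rewrite /olt hmv.
Qed.
End Expansions.

Theorem lemma3p3 (K : fieldType) (G : zmodType) (le : rel G)
    (nu : {poly K} -> option G) (Q : {poly K})
    (s : nat) (f_ : nat -> {poly K}) :
  krull_valuation le nu ->
  key_poly le nu Q ->
  (0 < (size Q).-1)%N ->
  (forall i, (i <= s)%N ->
     f_ i = 0 \/
     exists2 ps : seq {poly K},
       all (fun p : {poly K} => ((size p).-1 < (size Q).-1)%N) ps &
       f_ i = (\prod_(p <- ps) p)%R) ->
  truncation le nu Q (\sum_(i < s.+1) f_ i * Q ^+ i) =
  \big[omin le/None]_(i < s.+1) nu (f_ i * Q ^+ i).
Proof.
move=> hnu hkey hn hf.
have [q [B [E [hq hB hQB eps_max]]]] := eps_attained hnu hkey.1 hn.
have hdiv := key_small_division hnu hkey hn hq hB hQB eps_max.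
have hexp i : (i < s.+1)%N -> exists P, adapted le nu Q (f_ i) P.
  case/hf => [->|[ps hps ->]]; last exact: (adapted_prod hnu hn hdiv).
  by exists 0; apply: adapted0.
have [P [rP <- lb att]] := expansion_partial_sum hnu hn hexp.
apply: truncation_horner => //.
by case: att => [|[k _ ek]]; [left | right; exists k].
Qed.
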